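(* An infinite $\frac{7}{3}$-power-free binary word is a fixed point of a non-identity morphism $h:\{0,1\}^*\to\{0,1\}^*$ if and only if it is equal to the Thue–Morse word $\mu^\omega(0)$ or its complement $\mu^\omega(1)$.
   Context: $\mu$ is the Thue–Morse morphism, $\mu(0)=01$, $\mu(1)=10$, and $\mu^\omega(a)$ is the infinite word $\lim_{n\to\infty}\mu^n(a)$ for $a\in\{0,1\}$. The identity morphism maps $0\mapsto 0$, $1\mapsto 1$. An infinite word $\mathbf{w}$ is a fixed point of $h$ if $h(\mathbf{w})=\mathbf{w}$ (with $h$ applied letterwise). For a rational $\alpha\ge 1$, an $\alpha$-power is a word of the form $x^nx'$ with $x$ a nonempty word, $x'$ a prefix of $x$, $n$ a nonnegative integer and $n+|x'|/|x|=\alpha$. A word is $\alpha$-power-free if none of its finite subwords is a $\beta$-power for any rational $\beta\geq\alpha$. *)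

(* Binary alphabet {0,1} is encoded as bool: 0 = false, 1 = true. *)
From mathcomp Require Import all_boot all_order all_algebra.
Set Implicit Arguments. Unset Strict Implicit. Unset Printing Implicit Defensive.
Import Order.TTheory GRing.Theory Num.Theory.

Definition iword := nat -> bool.

Definition factor (w : iword) (i L : nat) : seq bool := mkseq (fun j => w (i + j)) L.

Definition pref (w : iword) (n : nat) : seq bool := factor w 0 n.

Definition is_power (u : seq bool) (beta : rat) : Prop :=
  exists (x : seq bool) (n : nat) (x' : seq bool),
    [/\ 0 < size x, prefix x' x,
        u = flatten (nseq n x) ++ x' &
        (n%:Q + (size x')%:Q / (size x)%:Q = beta)%R].

Definition power_free (alpha : rat) (w : iword) : Prop :=
  forall (i L : nat) (beta : rat), (alpha <= beta)%R -> ~ is_power (factor w i L) beta.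

Definition morphism := bool -> seq bool.

Definition morph_apply (h : morphism) (s : seq bool) : seq bool := flatten (map h s).

Definition is_identity (h : morphism) : Prop := forall b, h b = [:: b].

(* w is a fixed point of h: h(w) (the limit of h applied to the prefixes of w)
   is an infinite word equal to w. *)
Definition fixed_point (h : morphism) (w : iword) : Prop :=
  (forall n, prefix (morph_apply h (pref w n))
                    (pref w (size (morph_apply h (pref w n))))) /\
  (forall m, exists n, m <= size (morph_apply h (pref w n))).

Definition mu (s : seq bool) : seq bool := flatten (map (fun b => [:: b; ~~ b]) s).

(* mu^omega(a) = lim mu^n(a); since |mu^(i+1)(a)| = 2^(i+1) > i and mu^n(a)
   is a prefix of mu^(n+1)(a), position i of the limit is position i of mu^(i+1)(a). *)
Definition mu_omega (a : bool) : iword := fun i => nth false (iter i.+1 mu [:: a]) i.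

(* A 7/3-power-free binary word is rigid: it has no cube aaa, both 00 and 11 recur, and
   consecutive double letters are 2 or 4 apart, so from position 1 or 2 on it is a mu-image.
   If z = phi(w) with w and z both 7/3-power-free, the double letters of z force |phi(0)| and
   |phi(1)| to be even (the short double-free images are checked by evaluation), and halving
   z and phi along the mu-structure of z gives a smaller such pair; by induction phi(0) and
   phi(1) end with different letters.  For a fixed point w = h(w) of a non-identity h this
   rules out the odd alignment, so w = mu(w') with w' again such a fixed point, and hence
   every prefix of w of length 2^k is mu^k(w 0). *)

From mathcomp Require Import all_boot all_order all_algebra.
From mathcomp Require Import zify ring.
From Stdlib Require Import FunctionalExtensionality.
Set Implicit Arguments. Unset Strict Implicit. Unset Printing Implicit Defensive.
Import Order.TTheory GRing.Theory Num.Theory.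

Local Notation pf73 := (power_free (7%:Q / 3%:Q)%R).

(** * Powers and periodic factors *)

Lemma size_factor w i L : size (factor w i L) = L.
Proof. by rewrite size_mkseq. Qed.

Lemma nth_factor w i L k : k < L -> nth false (factor w i L) k = w (i + k).
Proof. exact: nth_mkseq. Qed.

Lemma factor_eq_nth w i (s : seq bool) :
  (forall k, k < size s -> w (i + k) = nth false s k) -> factor w i (size s) = s.
Proof.
move=> ws; apply: (@eq_from_nth _ false); rewrite size_factor // => k lt_k_s.
by rewrite nth_factor // ws.
Qed.

Lemma size_flatten_nseq T (x : seq T) n : size (flatten (nseq n x)) = n * size x.
Proof. by elim: n => //= n IH; rewrite size_cat IH mulSn. Qed.

Lemma nth_flatten_nseq T (x0 : T) (x : seq T) n k : k < n * size x ->
  nth x0 (flatten (nseq n x)) k = nth x0 x (k %% size x).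
Proof.
elim: n k => [|n IH] k //=; rewrite mulSn nth_cat => lt_k.
case: ltnP => [lt_k_x | le_x_k]; first by rewrite modn_small.
rewrite IH; last lia.
by rewrite -{2}(subnK le_x_k) modnDr.
Qed.

Lemma nth_periodic T (x0 : T) (y : seq T) p : 0 < p ->
  (forall k, k + p < size y -> nth x0 y k = nth x0 y (k + p)) ->
  forall k, k < size y -> nth x0 y k = nth x0 y (k %% p).
Proof.
move=> p_gt0 yp; elim/ltn_ind=> k IH lt_k_y.
have [lt_k_p | le_p_k] := ltnP k p; first by rewrite modn_small.
rewrite -(subnK le_p_k) modnDr -yp; last lia.
by rewrite IH //; lia.
Qed.

Lemma divn_add_modn_rat (L p : nat) : 0 < p ->
  ((L %/ p)%N%:Q + (L %% p)%N%:Q / p%:Q = L%:Q / p%:Q)%R.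
Proof.
move=> p_gt0; have p_neq0 : (p%:Q != 0)%R by rewrite intr_eq0 eqz_nat -lt0n.
by rewrite {3}(divn_eq L p) -!pmulrn natrD natrM; rewrite -pmulrn in p_neq0; field.
Qed.

Lemma periodic_is_power (y : seq bool) p : 0 < p -> p <= size y ->
  (forall k, k + p < size y -> nth false y k = nth false y (k + p)) ->
  is_power y ((size y)%:Q / p%:Q)%R.
Proof.
move=> p_gt0 le_p_y yp; set x := take p y.
have size_x : size x = p by rewrite size_take_min; lia.
have lt_mod : size y %% p < p by rewrite ltn_pmod.
exists x, (size y %/ p), (take (size y %% p) x); split.
- by rewrite size_x.
- by rewrite prefixE size_take size_x lt_mod.
- apply: (@eq_from_nth _ false) => [|k lt_k_y].
    by rewrite size_cat size_flatten_nseq size_take size_x lt_mod -divn_eq.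
  have nth_x j : j < size y -> nth false x (j %% p) = nth false y j.
    by move=> lt_j; rewrite nth_take ?ltn_pmod // -nth_periodic.
  rewrite nth_cat size_flatten_nseq size_x; case: ltnP => [lt_k | le_k].
    by rewrite nth_flatten_nseq size_x ?nth_x.
  have lt_k_r : k - size y %/ p * p < size y %% p by have := divn_eq (size y) p; lia.
  rewrite nth_take // -nth_x; last lia.
  by rewrite -{1}(subnK le_k) addnC modnMDl modn_small //; lia.
- by rewrite size_take size_x lt_mod divn_add_modn_rat.
Qed.

Lemma power_free_periodic alpha w i L p : power_free alpha w -> 0 < p -> p <= L ->
  (alpha <= L%:Q / p%:Q)%R -> ~ (forall k, k + p < L -> w (i + k) = w (i + k + p)).
Proof.
move=> free_w p_gt0 le_p_L le_alpha wp; apply: (free_w i L _ le_alpha).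
have := @periodic_is_power (factor w i L) p p_gt0; rewrite size_factor; apply=> // k lt_k.
rewrite !nth_factor; try lia.
by rewrite addnA wp.
Qed.

Lemma mu_cat s t : mu (s ++ t) = mu s ++ mu t.
Proof. by rewrite /mu map_cat flatten_cat. Qed.

Lemma size_mu s : size (mu s) = (size s).*2.
Proof. by elim: s => //= a s IH; rewrite IH doubleS. Qed.

Lemma nth_mu s k : k < (size s).*2 ->
  nth false (mu s) k = odd k (+) nth false s k./2.
Proof. by elim: s k => [|a s IH] [|[|k]] //= lt_k; rewrite IH //= negbK. Qed.

Lemma is_power_mu u beta : is_power u beta -> is_power (mu u) beta.
Proof.
case=> x [n [x' [x_gt0 /prefixP[t x_eq] -> <-]]].
exists (mu x), n, (mu x'); split.
- by rewrite size_mu double_gt0.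
- by rewrite x_eq mu_cat prefix_prefix.
- by rewrite mu_cat; congr (_ ++ _); elim: n => //= n IH; rewrite mu_cat IH.
- have x_neq0 : ((size x)%:Q != 0)%R by rewrite intr_eq0 eqz_nat -lt0n.
  rewrite !size_mu -!muln2 -!pmulrn !natrM; rewrite -pmulrn in x_neq0.
  by field; rewrite x_neq0.
Qed.

(** * Factors of 7/3-power-free binary words *)

Definition has_period_at (s : seq bool) i L p :=
  all (fun k => nth false s (i + k) == nth false s (i + k + p)) (iota 0 (L - p)).

(* (7p + 2) %/ 3 is the least length of a factor of period p with exponent at least 7/3. *)
Definition power_free73b (s : seq bool) :=
  all (fun i => all (fun p => (i + (7 * p + 2) %/ 3 <= size s) ==>
                              ~~ has_period_at s i ((7 * p + 2) %/ 3) p)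
         (iota 1 (size s))) (iota 0 (size s)).

Lemma ratio_ge_7_3 (L p : nat) : 0 < p -> 7 * p <= 3 * L -> (7%:Q / 3%:Q <= L%:Q / p%:Q)%R.
Proof.
move=> p_gt0 le_7p; rewrite -!pmulrn ler_pdivrMr ?ltr0n // mulrAC ler_pdivlMr ?ltr0n //.
by rewrite -!natrM ler_nat; lia.
Qed.

Lemma power_free73b_factor w i L : pf73 w -> power_free73b (factor w i L).
Proof.
move=> free_w; apply/allP => j; rewrite mem_iota size_factor => /andP[_ lt_j].
apply/allP => p; rewrite mem_iota => /andP[p_gt0 _]; set L' := (7 * p + 2) %/ 3.
have le_7p : 7 * p <= 3 * L' by rewrite /L'; lia.
apply/implyP => fits; apply/negP => /allP per.
apply: (power_free_periodic (i := i + j) free_w p_gt0 _ (ratio_ge_7_3 p_gt0 le_7p)); first lia.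
move=> k lt_k; have /per/eqP : k \in iota 0 (L' - p) by rewrite mem_iota; lia.
rewrite !nth_factor; try lia.
by rewrite !addnA.
Qed.

Fixpoint binary_words n : seq (seq bool) :=
  if n is n'.+1 then map (cons false) (binary_words n') ++ map (cons true) (binary_words n')
  else [:: [::]].

Lemma mem_binary_words (u : seq bool) : u \in binary_words (size u).
Proof. by elim: u => //= b u IH; case: b; rewrite mem_cat map_f ?orbT. Qed.

Lemma pf73_factor_check n (P : pred (seq bool)) :
  all (fun u => power_free73b u ==> P u) (binary_words n) ->
  forall w i, pf73 w -> P (factor w i n).
Proof.
move=> /allP check w i free_w; have := check (factor w i n).
by rewrite -{2}(size_factor w i n) mem_binary_words power_free73b_factor //; apply.
Qed.

Lemma eq_negb_neq (a c : bool) : a != c -> a = ~~ c.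
Proof. by case: a; case: c. Qed.

Lemma no_cube_check : all (fun u => power_free73b u ==>
  if u is [:: a0; a1; a2] then (a0 != a1) || (a1 != a2) else true) (binary_words 3).
Proof. by vm_compute. Qed.

Lemma pf73_no_cube w i : pf73 w -> w i = w i.+1 -> w i.+1 = w i.+2 -> False.
Proof.
move=> free_w e1 e2; have := pf73_factor_check no_cube_check i free_w.
by rewrite /factor /mkseq /= !addnS addn0 e1 e2 !eqxx.
Qed.

Lemma pf73_double_border w c j : pf73 w -> 0 < j -> w j = c -> w j.+1 = c ->
  w j.-1 = ~~ c /\ w j.+2 = ~~ c.
Proof.
case: j => // j free_w _ e1 e2; split; apply: eq_negb_neq; apply/eqP => e.
  by apply: (pf73_no_cube (i := j) free_w); rewrite ?e ?e1 ?e2.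
by apply: (pf73_no_cube (i := j.+1) free_w); rewrite ?e ?e1 ?e2.
Qed.

(* Consecutive double letters are 2 or 4 apart, so all double letters after position 0 sit at
   positions of the same parity. *)
Lemma double_next_check : all (fun u => power_free73b u ==>
  if u is [:: _; a1; a2; a3; a4; a5; a6] then
    (a1 == a2) ==> [&& a2 != a3, a4 != a5 & (a3 == a4) || (a5 == a6)]
  else true) (binary_words 7).
Proof. by vm_compute. Qed.

Lemma pf73_double_next w i : pf73 w -> 0 < i -> w i = w i.+1 ->
  [/\ w i.+1 != w i.+2, w i.+3 != w i.+4 & (w i.+2 == w i.+3) || (w i.+4 == w i.+4.+1)].
Proof.
case: i => // i free_w _ e; have := pf73_factor_check double_next_check i free_w.
by rewrite /factor /mkseq /= !addnS addn0 e eqxx /= => /and3P.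
Qed.

Lemma pf73_double_gap w i d : pf73 w -> 0 < i -> w i = w i.+1 ->
  w (i + d) = w (i + d).+1 -> ~~ odd d.
Proof.
move=> free_w; elim/ltn_ind: d i => d IH i i_gt0 ei.
have [n12 n34 next] := pf73_double_next free_w i_gt0 ei.
case: d IH => [|[|[|[|d]]]] IH //= ed.
- by rewrite addn1 in ed; rewrite ed eqxx in n12.
- by rewrite addn3 in ed; rewrite ed eqxx in n34.
rewrite !negbK; case/orP: next => /eqP e.
  by have /= := IH d.+2 ltac:(lia) i.+2 isT e; rewrite !negbK; apply; rewrite !addSnnS.
by apply: (IH d ltac:(lia) i.+4 isT e); rewrite !addSnnS.
Qed.

Lemma pf73_double_parity w i j : pf73 w -> 0 < i -> 0 < j ->
  w i = w i.+1 -> w j = w j.+1 -> odd i = odd j.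
Proof.
move=> free_w; wlog le_ij : i j / i <= j => [hyp | i_gt0 _ ei ej].
  by case: (leqP i j) => [|/ltnW] le ? ? ? ?; [|symmetry]; apply: hyp.
move: ej; rewrite -(subnKC le_ij) oddD => /(pf73_double_gap free_w i_gt0 ei).
by move/negbTE ->; rewrite addbF.
Qed.

Lemma both_doubles_check : all (fun u => power_free73b u ==>
  all (fun c => has (fun k => (nth false u k == c) && (nth false u k.+1 == c)) (iota 0 8))
      [:: false; true]) (binary_words 9).
Proof. by vm_compute. Qed.

Lemma pf73_double_after w c N : pf73 w -> exists j, [/\ N < j, w j = c & w j.+1 = c].
Proof.
move=> free_w; have /allP/(_ c) := pf73_factor_check both_doubles_check N.+1 free_w.
case/(_ _)/hasP => [|k]; first by case: c.
rewrite mem_iota => /andP[_ lt_k] /andP[/eqP e0 /eqP e1].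
rewrite !nth_factor in e0 e1; try lia.
by exists (N.+1 + k); rewrite -addnS; split=> //; lia.
Qed.

Lemma pf73_double_block w c i : pf73 w ->
  (forall j, 0 < j -> w j = ~~ c -> w j.+1 = c -> w j.+2 = ~~ c -> False) ->
  0 < i -> w i = c -> w i.+1 = c ->
  [/\ w i.+2 = ~~ c, w i.+3 = ~~ c, w i.+4 = c & w i.+4.+1 = c].
Proof.
move=> free_w c_not_isolated i_gt0 e0 e1.
have [_ e2] := pf73_double_border free_w i_gt0 e0 e1.
have e3 : w i.+3 = ~~ c.
  apply/eq_negb_neq/eqP => e3; case: (eqVneq (w i.+4) c) => [e4 | /eq_negb_neq e4].
    have := pf73_double_parity (j := i.+3) free_w i_gt0 isT
      (etrans e0 (esym e1)) (etrans e3 (esym e4)).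
    by rewrite /= !negbK; case: (odd i).
  exact: (c_not_isolated i.+2).
have e4 : w i.+4 = c.
  case: (eqVneq (w i.+4) c) => // /eq_negb_neq e4; exfalso.
  by apply: (pf73_no_cube (i := i.+2) free_w); rewrite ?e2 ?e3 ?e4.
split=> //; case: (eqVneq (w i.+4.+1) c) => // /eq_negb_neq e5; exfalso.
exact: (c_not_isolated i.+3).
Qed.

(* Otherwise w continues as c c c' c' c c c' c' c c, with c' = ~~ c: period 4, length 10. *)
Lemma pf73_isolated_letter w c : pf73 w ->
  ~ (forall j, 0 < j -> w j = ~~ c -> w j.+1 = c -> w j.+2 = ~~ c -> False).
Proof.
move=> free_w c_not_isolated.
have [i [i_gt0 e0 e1]] := pf73_double_after c 0 free_w.
have [e2 e3 e4 e5] := pf73_double_block free_w c_not_isolated i_gt0 e0 e1.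
have [e6 e7 e8 e9] := pf73_double_block (i := i.+4) free_w c_not_isolated isT e4 e5.
apply: (power_free_periodic (i := i) free_w (isT : 0 < 4) (isT : 4 <= 10)).
  exact: ratio_ge_7_3.
case=> [|[|[|[|[|[|k]]]]]] lt_k; last by rewrite addnC in lt_k.
all: by rewrite !addnS !addn0 ?e0 ?e1 ?e2 ?e3 ?e4 ?e5 ?e6 ?e7 ?e8 ?e9.
Qed.

(** * 7/3-power-free images of 7/3-power-free words *)

Definition nonerasing (phi : morphism) := forall c, 0 < size (phi c).

Definition offset (phi : morphism) (w : iword) j := size (morph_apply phi (pref w j)).

Definition image_of (phi : morphism) (w z : iword) :=
  forall j k, k < size (phi (w j)) -> z (offset phi w j + k) = nth false (phi (w j)) k.

Definition has_double (s : seq bool) :=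
  has (fun k => nth false s k == nth false s k.+1) (iota 0 (size s).-1).

Lemma has_doubleP (s : seq bool) :
  reflect (exists2 o, o.+1 < size s & nth false s o = nth false s o.+1) (has_double s).
Proof.
apply: (iffP hasP) => [[o] | [o lt_o /eqP e]].
  by rewrite mem_iota => /andP[_ lt_o] /eqP e; exists o => //; lia.
by exists o; rewrite // mem_iota; lia.
Qed.

Lemma prefS w j : pref w j.+1 = rcons (pref w j) (w j).
Proof. exact: mkseqS. Qed.

Lemma morph_apply_rcons phi s c : morph_apply phi (rcons s c) = morph_apply phi s ++ phi c.
Proof. by rewrite /morph_apply map_rcons flatten_rcons. Qed.

Lemma offsetS phi w j : offset phi w j.+1 = offset phi w j + size (phi (w j)).
Proof. by rewrite /offset prefS morph_apply_rcons size_cat. Qed.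

Lemma offset_ge phi w j : nonerasing phi -> j <= offset phi w j.
Proof. by move=> phi_ne; elim: j => // j IH; rewrite offsetS; have := phi_ne (w j); lia. Qed.

Lemma offset_even phi w j : (forall c, ~~ odd (size (phi c))) -> ~~ odd (offset phi w j).
Proof.
by move=> phi_even; elim: j => // j IH; rewrite offsetS oddD (negbTE IH) (negbTE (phi_even _)).
Qed.

Lemma image_of_pref phi w z n k : image_of phi w z -> k < offset phi w n ->
  z k = nth false (morph_apply phi (pref w n)) k.
Proof.
move=> z_eq; elim: n k => [|n IH] k //; rewrite offsetS prefS morph_apply_rcons nth_cat.
case: (ltnP k (offset phi w n)) => [lt_k _ | le_k lt_k]; first exact: IH.
rewrite /offset in le_k lt_k *.
by rewrite -z_eq ?subnKC //; lia.
Qed.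

Lemma double_check : all (fun u => power_free73b u ==> has_double u) (binary_words 5).
Proof. by vm_compute. Qed.

Definition short_alternating : seq (seq bool) :=
  [:: [:: false]; [:: true]; [:: false; true]; [:: true; false];
      [:: false; true; false]; [:: true; false; true];
      [:: false; true; false; true]; [:: true; false; true; false]].

Lemma mem_short_alternating s : 0 < size s -> size s <= 4 -> ~~ has_double s ->
  s \in short_alternating.
Proof.
case: s => [|a [|b [|c [|d [|e s]]]]] //= _ _;
by repeat match goal with x : bool |- _ => case: x end.
Qed.

Lemma alternating_border_check :
  all (fun s => ~~ power_free73b (last false s :: s ++ s)) short_alternating.
Proof. by vm_compute. Qed.

Definition alternating_from o (z : iword) := forall k, z (o + k.*2).+1 = ~~ z (o + k.*2).

Definition halve o (z : iword) : iword := fun k => z (o + k.*2).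

Definition halve_seq o (s : seq bool) := mkseq (fun k => nth false s (o + k.*2)) (size s)./2.

Definition halve_morph o (phi : morphism) : morphism := fun c => halve_seq o (phi c).

Lemma factor_alternating o z i L : alternating_from o z ->
  factor z (o + i.*2) L.*2 = mu (factor (halve o z) i L).
Proof.
move=> alt; apply: (@eq_from_nth _ false) => [|k]; first by rewrite size_mu !size_factor.
rewrite size_factor => lt_k; rewrite nth_mu ?size_factor // !nth_factor ?ltn_half_double //.
have -> : o + i.*2 + k = odd k + (o + (i + k./2).*2).
  by rewrite doubleD; have := odd_double_half k; lia.
by rewrite /halve; case: odd; rewrite //= add1n alt.
Qed.

Lemma power_free_halve alpha o z : alternating_from o z ->
  power_free alpha z -> power_free alpha (halve o z).
Proof.
move=> alt free_z i L beta le_beta /is_power_mu.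
by rewrite -factor_alternating //; apply: free_z.
Qed.

Lemma size_halve_seq o s : size (halve_seq o s) = (size s)./2.
Proof. exact: size_mkseq. Qed.

Lemma offset_halve o phi w j : (forall c, ~~ odd (size (phi c))) ->
  (offset (halve_morph o phi) w j).*2 = offset phi w j.
Proof.
move=> phi_even; elim: j => // j IH.
by rewrite !offsetS doubleD IH size_halve_seq even_halfK.
Qed.

Lemma image_of_halve o phi w z : o <= 1 -> (forall c, ~~ odd (size (phi c))) ->
  image_of phi w z -> image_of (halve_morph o phi) w (halve o z).
Proof.
move=> le_o1 phi_even z_eq j k; rewrite size_halve_seq => lt_k.
have lt_ok : o + k.*2 < size (phi (w j)).
  by rewrite -(even_halfK (phi_even (w j))); lia.
by rewrite /halve nth_mkseq // doubleD offset_halve // addnCA z_eq.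
Qed.

Lemma last_halve_seq1 s : ~~ odd (size s) -> last false (halve_seq 1 s) = last false s.
Proof.
move=> even_s; case: (posnP (size s)) => [/size0nil -> // | s_gt0].
have := even_halfK even_s; rewrite -!nth_last size_halve_seq nth_mkseq; last lia.
by move=> h; congr nth; lia.
Qed.

Lemma last_halve_seq0 s : ~~ odd (size s) -> last false (halve_seq 0 s) = nth false s (size s).-2.
Proof.
move=> even_s; case: (posnP (size s)) => [/size0nil -> // | s_gt0].
have := even_halfK even_s; rewrite -!nth_last size_halve_seq nth_mkseq; last lia.
by move=> h; congr nth; lia.
Qed.

Lemma pf73_alternating z : pf73 z -> alternating_from 1 z \/ alternating_from 2 z.
Proof.
move=> free_z; have [i [i_gt0 e0 e1]] := pf73_double_after false 0 free_z.
have parity j : z j = z j.+1 -> 0 < j -> odd j = odd i.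
  by move=> ej j_gt0; apply: pf73_double_parity free_z j_gt0 i_gt0 ej _; rewrite e0 e1.
have [odd_i | even_i] := boolP (odd i); [right | left] => k;
  apply/eq_negb_neq/eqP => e; have := parity _ (esym e) isT; rewrite oddD odd_double.
  by rewrite odd_i.
by rewrite (negbTE even_i).
Qed.

Section ImageOfPowerFree.

Variables (phi : morphism) (w z : iword).
Hypotheses (free_w : pf73 w) (free_z : pf73 z).
Hypotheses (z_eq : image_of phi w z) (phi_ne : nonerasing phi).

Lemma image_double j c o : w j = c -> o.+1 < size (phi c) ->
  nth false (phi c) o = nth false (phi c) o.+1 ->
  z (offset phi w j + o) = z (offset phi w j + o).+1.
Proof. by move=> <- lt_o e; rewrite -addnS !z_eq // ltnW. Qed.

Lemma offset_add_gt0 j o : 0 < j -> 0 < offset phi w j + o.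
Proof. by have := offset_ge w j phi_ne; lia. Qed.

Lemma double_image_even d : has_double (phi d) -> ~~ odd (size (phi d)).
Proof.
case/has_doubleP => o lt_o e; have [j [j_gt0 e0 e1]] := pf73_double_after d 0 free_w.
have := pf73_double_parity free_z (offset_add_gt0 o j_gt0) (offset_add_gt0 o (ltn0Sn j))
  (image_double e0 lt_o e) (image_double e1 lt_o e).
by rewrite offsetS e0 addnAC [odd (_ + size _)]oddD; case: odd; case: odd.
Qed.

Lemma double_image_isolated d : has_double (phi d) -> odd (size (phi (~~ d))) ->
  forall j, 0 < j -> w j = d -> w j.+1 = ~~ d -> w j.+2 = d -> False.
Proof.
move=> dbl odd_nd j j_gt0 e0 e1 e2; have even_d := double_image_even dbl.
case/has_doubleP: dbl => o lt_o e.
have := pf73_double_parity free_z (offset_add_gt0 o j_gt0) (offset_add_gt0 o (ltn0Sn j.+1))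
  (image_double e0 lt_o e) (image_double e2 lt_o e).
rewrite !offsetS e0 e1 -!addnA !oddD odd_nd (negbTE even_d).
by case: odd; case: odd.
Qed.

Lemma double_image_sizes_even d : has_double (phi d) -> forall c, ~~ odd (size (phi c)).
Proof.
move=> dbl c; have [-> | /eq_negb_neq ->] := eqVneq c d; first exact: double_image_even.
apply/negP => odd_nd; apply: (pf73_isolated_letter (c := ~~ d) free_w) => j j_gt0.
by rewrite negbK; apply: double_image_isolated.
Qed.

Lemma double_free_image_short c : ~~ has_double (phi c) -> size (phi c) <= 4.
Proof.
move=> no_dbl; rewrite leqNgt; apply/negP => gt4.
have [j [_ ej _]] := pf73_double_after c 0 free_w.
rewrite -ej in no_dbl gt4.
case/has_doubleP: (pf73_factor_check double_check (offset phi w j) free_z) => o.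
rewrite size_factor => lt_o; rewrite !nth_factor; try lia.
rewrite !z_eq; try lia.
by move=> e; case/negP: no_dbl; apply/has_doubleP; exists o => //; lia.
Qed.

Lemma image_factor_border j : 0 < j ->
  factor z (offset phi w j).-1 (1 + size (phi (w j)) + size (phi (w j.+1))) =
  last false (phi (w j.-1)) :: phi (w j) ++ phi (w j.+1).
Proof.
move=> j_gt0; have off : offset phi w j = offset phi w j.-1 + size (phi (w j.-1)).
  by rewrite -offsetS prednK.
have := offset_ge w j phi_ne; have := phi_ne (w j.-1) => ne_prev off_ge.
rewrite -addnA -size_cat add1n; apply: (factor_eq_nth (s := _ :: _)) => -[_ | k].
  by rewrite addn0 -nth_last -z_eq; [congr z | ]; lia.
rewrite /= size_cat nth_cat => lt_k; case: ltnP => [lt_k' | le_k'].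
  by rewrite -z_eq //; congr z; lia.
by rewrite -z_eq; [congr z; rewrite offsetS | ]; lia.
Qed.

Lemma double_free_image_last c : ~~ has_double (phi c) ->
  last false (phi (~~ c)) != last false (phi c).
Proof.
move=> no_dbl; apply/eqP => e_last.
have s_alt := mem_short_alternating (phi_ne c) (double_free_image_short no_dbl) no_dbl.
have [j [j_gt0 e0 e1]] := pf73_double_after c 0 free_w.
have [ej _] := pf73_double_border free_w j_gt0 e0 e1.
have := power_free73b_factor (offset phi w j).-1
  (1 + size (phi (w j)) + size (phi (w j.+1))) free_z.
rewrite image_factor_border // e0 e1 ej e_last.
by move: (allP alternating_border_check _ s_alt) => /negbTE ->.
Qed.

Hypothesis phi_even : forall c, ~~ odd (size (phi c)).

Lemma size_image_gt1 c : 1 < size (phi c).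
Proof. by move: (phi_even c) (phi_ne c); case: size => [|[|]]. Qed.

Lemma offset_double_gt0 j : 0 < j -> exists m, offset phi w j = 2 + m.*2.
Proof.
move=> j_gt0; exists ((offset phi w j)./2).-1.
by have := even_halfK (offset_even w j phi_even); have := offset_ge w j phi_ne; lia.
Qed.

Lemma image_alternating_from0 : alternating_from 2 z -> alternating_from 0 z.
Proof.
move=> alt [|k]; last by rewrite add0n doubleS; have := alt k; rewrite add2n.
have [j [j_gt0 ej _]] := pf73_double_after (w 0) 0 free_w.
have [m em] := offset_double_gt0 j_gt0; have := alt m; rewrite -em.
have z0 : z 0 = nth false (phi (w 0)) 0 := @z_eq 0 0 (ltnW (size_image_gt1 _)).
have z1 : z 1 = nth false (phi (w 0)) 1 := @z_eq 0 1 (size_image_gt1 _).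
rewrite -[offset _ _ _]addn0 -addnS !z_eq ej ?size_image_gt1 ?(ltnW (size_image_gt1 _)) //.
by rewrite /= z0 z1.
Qed.

Lemma image_alternating_letters : alternating_from 0 z ->
  forall c k, k.*2.+1 < size (phi c) -> nth false (phi c) k.*2.+1 = ~~ nth false (phi c) k.*2.
Proof.
move=> alt c k lt_k; have [j [_ ej _]] := pf73_double_after c 0 free_w.
rewrite -ej -!z_eq ?ej ?(ltnW lt_k) // addnS.
by have := alt ((offset phi w j)./2 + k); rewrite add0n doubleD even_halfK ?offset_even.
Qed.

Lemma image_junction : alternating_from 1 z ->
  forall j, nth false (phi (w j.+1)) 0 = ~~ last false (phi (w j)).
Proof.
move=> alt j; have [m em] := offset_double_gt0 (ltn0Sn j).
have e1 : (1 + m.*2).+1 = offset phi w j.+1 + 0 by rewrite em addn0.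
have e2 : 1 + m.*2 = offset phi w j + (size (phi (w j))).-1.
  by move: em; rewrite offsetS; have := phi_ne (w j); lia.
have := alt m; rewrite e1 e2 !z_eq ?nth_last //; have := phi_ne (w j); lia.
Qed.

Lemma image_last_eq : alternating_from 1 z -> last false (phi false) = last false (phi true).
Proof.
move=> alt; have [j [j_gt0 e0 e1]] := pf73_double_after false 0 free_w.
have [ej _] := pf73_double_border free_w j_gt0 e0 e1.
have := image_junction alt j; have := image_junction alt j.-1.
by rewrite prednK // e0 e1 ej => -> /negb_inj ->.
Qed.

Lemma image_last_halve0 : alternating_from 0 z ->
  forall c, last false (halve_seq 0 (phi c)) = ~~ last false (phi c).
Proof.
move=> alt c; rewrite last_halve_seq0 // -nth_last.
have [k ek] : exists k, size (phi c) = k.*2.+2.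
  exists (size (phi c))./2.-1; have := even_halfK (phi_even c).
  by have := size_image_gt1 c; lia.
by rewrite ek /= (image_alternating_letters alt) ?negbK ?ek.
Qed.

Lemma halve_morph_nonerasing o : nonerasing (halve_morph o phi).
Proof.
move=> c; rewrite size_halve_seq; have := even_halfK (phi_even c).
by have := size_image_gt1 c; lia.
Qed.

End ImageOfPowerFree.

Theorem pf73_image_last_neq phi w z : pf73 w -> pf73 z -> image_of phi w z -> nonerasing phi ->
  last false (phi false) != last false (phi true).
Proof.
move=> free_w; move En: (size (phi false) + size (phi true)) => n.
elim/ltn_ind: n phi z En => n IH phi z En free_z z_eq phi_ne.
have [dbl | ] := boolP (has_double (phi false) || has_double (phi true)); last first.
  by rewrite negb_or eq_sym => /andP[/(double_free_image_last free_w free_z z_eq phi_ne)].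
have phi_even : forall c, ~~ odd (size (phi c)).
  by case/orP: dbl => /(double_image_sizes_even free_w free_z z_eq phi_ne).
have IH_halve o : o <= 1 -> alternating_from o z ->
    last false (halve_seq o (phi false)) != last false (halve_seq o (phi true)).
  move=> le_o1 alt; apply: (IH _ _ (halve_morph o phi) (halve o z) erefl) => //.
  - rewrite !size_halve_seq -En; have := even_halfK (phi_even false).
    by have := even_halfK (phi_even true); have := phi_ne false; have := phi_ne true; lia.
  - exact: power_free_halve.
  - exact: image_of_halve.
  - exact: halve_morph_nonerasing.
case: (pf73_alternating free_z) => [alt1 | alt2].
  by have := IH_halve 1 isT alt1; rewrite !last_halve_seq1.
have alt0 := image_alternating_from0 free_w z_eq phi_ne phi_even alt2.
have := IH_halve 0 isT alt0.
by rewrite !(image_last_halve0 free_w z_eq phi_ne phi_even alt0) (inj_eq negb_inj).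
Qed.

Lemma pf73_image_alternating phi w z : pf73 w -> pf73 z -> image_of phi w z -> nonerasing phi ->
  (forall c, ~~ odd (size (phi c))) -> alternating_from 0 z.
Proof.
move=> free_w free_z z_eq phi_ne phi_even.
have [alt1 | alt2] := pf73_alternating free_z; last first.
  exact: image_alternating_from0 free_w z_eq phi_ne phi_even alt2.
have := pf73_image_last_neq free_w (power_free_halve alt1 free_z)
  (image_of_halve (o := 1) isT phi_even z_eq) (halve_morph_nonerasing phi_ne phi_even 1).
by rewrite !last_halve_seq1 // (image_last_eq free_w z_eq phi_ne phi_even alt1) eqxx.
Qed.

(** * Fixed points *)

Lemma prefix_pref w m n : m <= n -> prefix (pref w m) (pref w n).
Proof.
move=> le_mn; rewrite prefixE size_factor; apply/eqP/(@eq_from_nth _ false) => [|k].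
  by rewrite size_take_min !size_factor; lia.
by rewrite size_take_min size_factor => lt_k; rewrite nth_take ?nth_factor //; lia.
Qed.

Lemma image_of_morph_apply phi w z n : image_of phi w z ->
  morph_apply phi (pref w n) = pref z (offset phi w n).
Proof.
move=> z_eq; apply: esym; apply: factor_eq_nth => k lt_k.
by rewrite add0n; apply: image_of_pref z_eq lt_k.
Qed.

Lemma fixed_point_image K w : fixed_point K w -> image_of K w w.
Proof.
case=> pre _ j k lt_k; move: (pre j.+1); rewrite prefixE take_oversize ?size_factor //.
move=> /eqP/(congr1 (nth false ^~ (offset K w j + k))).
rewrite nth_factor; last by rewrite prefS morph_apply_rcons size_cat /offset; lia.
by rewrite prefS morph_apply_rcons nth_cat /offset ltnNge leq_addr /= addKn.
Qed.

Lemma morph_apply_erased phi c s : phi c = [::] ->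
  morph_apply phi s = flatten (nseq (count_mem (~~ c) s) (phi (~~ c))).
Proof.
move=> erased; elim: s => // a s IH.
rewrite /morph_apply /= -/(morph_apply phi s) IH.
by case: c erased {IH}; case: a => e; rewrite ?e.
Qed.

Lemma fixed_point_nonerasing K w : pf73 w -> fixed_point K w -> nonerasing K.
Proof.
move=> free_w fp c; have w_eq := fixed_point_image fp; case: fp => _ unbounded.
rewrite lt0n; apply/negP => /eqP/size0nil erased; set p := size (K (~~ c)).
have offsetE n : offset K w n = count_mem (~~ c) (pref w n) * p.
  by rewrite /offset (morph_apply_erased _ erased) size_flatten_nseq.
have [p0 | p_gt0] := posnP p.
  by have [n] := unbounded 1; rewrite -/(offset K w n) offsetE p0 muln0.
have [n le_n] := unbounded (3 * p); rewrite -/(offset K w n) in le_n.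
have w_per k : k < 3 * p -> w k = nth false (K (~~ c)) (k %% p).
  move=> lt_k; rewrite (image_of_pref (n := n) w_eq) ?(morph_apply_erased _ erased); last lia.
  by rewrite nth_flatten_nseq // -/p -offsetE; lia.
apply: (power_free_periodic (i := 0) (L := 3 * p) free_w p_gt0); first lia.
  by apply: ratio_ge_7_3 => //; lia.
by move=> k lt_k; rewrite !add0n !w_per ?modnDr //; lia.
Qed.

Definition morph_of (k0 k1 : seq bool) : morphism := fun c => if c then k1 else k0.

Lemma alternating_fixed_point_check : all (fun k0 => all (fun k1 =>
    [|| ~~ odd (size k0) && ~~ odd (size k1), (k0 == [:: false]) && (k1 == [:: true]) |
     all (fun u => power_free73b u ==> power_free73b (morph_apply (morph_of k0 k1) u) ==>
                   ~~ (prefix u (morph_apply (morph_of k0 k1) u) ||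
                       prefix (morph_apply (morph_of k0 k1) u) u))
         (binary_words 5)])
  short_alternating) short_alternating.
Proof. by vm_compute. Qed.

Lemma fixed_point_sizes_even K w : pf73 w -> image_of K w w -> nonerasing K ->
  ~ is_identity K -> forall c, ~~ odd (size (K c)).
Proof.
move=> free_w w_eq K_ne K_nid.
have [| /norP[nd0 nd1]] := boolP (has_double (K false) || has_double (K true)).
  by case/orP => /(double_image_sizes_even free_w free_w w_eq K_ne).
have alt c : ~~ has_double (K c) -> K c \in short_alternating.
  move=> nd; have short := double_free_image_short free_w free_w w_eq nd.
  exact: mem_short_alternating (K_ne c) short nd.
case/or3P: (allP (allP alternating_fixed_point_check _ (alt _ nd0)) _ (alt _ nd1)).
- by case/andP=> e0 e1 [].
- by case/andP=> /eqP e0 /eqP e1; case: K_nid => -[].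
have u5 : pref w 5 \in binary_words 5 by rewrite -{2}(size_factor w 0 5) mem_binary_words.
move=> /allP/(_ _ u5).
have -> : morph_apply (morph_of (K false) (K true)) (pref w 5) = pref w (offset K w 5).
  by rewrite -(image_of_morph_apply 5 w_eq); congr flatten; apply: eq_map => -[].
rewrite !(power_free73b_factor 0 _ free_w) !implyTb => /negP[].
by case: (leqP 5 (offset K w 5)) => [le | /ltnW le]; apply/orP; [left | right];
  apply: prefix_pref.
Qed.

Definition comp_mu (phi : morphism) : morphism := fun c => phi c ++ phi (~~ c).

Lemma offset_comp_mu phi w j : alternating_from 0 w ->
  offset (comp_mu phi) (halve 0 w) j = offset phi w j.*2.
Proof.
move=> alt; elim: j => // j IH.
by rewrite offsetS IH doubleS !offsetS alt size_cat addnA.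
Qed.

Lemma image_of_comp_mu phi w z : alternating_from 0 w -> image_of phi w z ->
  image_of (comp_mu phi) (halve 0 w) z.
Proof.
move=> alt z_eq j k; rewrite offset_comp_mu // size_cat nth_cat /halve add0n => lt_k.
case: ltnP => [lt_k' | le_k']; first exact: z_eq.
have altj : w j.*2.+1 = ~~ w j.*2 := alt j.
have := z_eq j.*2.+1 (k - size (phi (w j.*2))); rewrite altj offsetS -addnA subnKC //.
by apply; lia.
Qed.

Lemma pf73_fixed_point_halve K w : pf73 w -> image_of K w w -> nonerasing K ->
  ~ is_identity K -> alternating_from 0 w /\
  exists K', [/\ image_of K' (halve 0 w) (halve 0 w), nonerasing K' & ~ is_identity K'].
Proof.
move=> free_w w_eq K_ne K_nid; have K_even := fixed_point_sizes_even free_w w_eq K_ne K_nid.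
have halve_ne := halve_morph_nonerasing K_ne K_even.
have alt0 := pf73_image_alternating free_w free_w w_eq K_ne K_even.
split=> //; exists (comp_mu (halve_morph 0 K)); split.
- exact/image_of_comp_mu/image_of_halve.
- by move=> c; rewrite size_cat; have := halve_ne 0 c; lia.
- have := halve_ne 0 false; have := halve_ne 0 true; rewrite /halve_morph => ne1 ne0.
  by move=> /(_ false)/(congr1 size); rewrite size_cat -[~~ false]/true /=; lia.
Qed.

Lemma pf73_fixed_point_pref K w k : pf73 w -> image_of K w w -> nonerasing K ->
  ~ is_identity K -> pref w (2 ^ k) = iter k mu [:: w 0].
Proof.
elim: k K w => [|k IH] K w free_w w_eq K_ne K_nid; first by rewrite /pref /factor /mkseq /=.
have [alt [K' [w'_eq K'_ne K'_nid]]] := pf73_fixed_point_halve free_w w_eq K_ne K_nid.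
have pref_mu n : pref w n.*2 = mu (pref (halve 0 w) n) := factor_alternating 0 n alt.
rewrite expnS mul2n pref_mu iterS.
by rewrite (IH K' _ (power_free_halve alt free_w) w'_eq K'_ne K'_nid).
Qed.

(** * The Thue-Morse word *)

Lemma size_iter_mu a m : size (iter m mu [:: a]) = 2 ^ m.
Proof. by elim: m => // m IH; rewrite iterS size_mu IH expnS mul2n. Qed.

Lemma prefix_iter_mu a m n : m <= n -> prefix (iter m mu [:: a]) (iter n mu [:: a]).
Proof.
have mu_prefix s t : prefix s t -> prefix (mu s) (mu t).
  by case/prefixP => u ->; rewrite mu_cat prefix_prefix.
have step k : prefix (iter k mu [:: a]) (iter k.+1 mu [:: a]).
  by elim: k => [|k IH]; [rewrite /= eqxx | exact: mu_prefix IH].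
elim: n => [|n IH]; first by rewrite leqn0 => /eqP ->; apply: prefix_refl.
rewrite leq_eqVlt => /orP[/eqP -> | /IH le]; first exact: prefix_refl.
exact: prefix_trans le (step n).
Qed.

Lemma mu_omegaE a m i : i < 2 ^ m -> mu_omega a i = nth false (iter m mu [:: a]) i.
Proof.
have nth_prefix s t j : prefix s t -> j < size s -> nth false t j = nth false s j.
  by case/prefixP => u -> lt_j; rewrite nth_cat lt_j.
move=> lt_i; have lt_i' : i < 2 ^ i.+1 := ltnW (ltn_expl i.+1 (isT : 1 < 2)).
case: (leqP m i.+1) => [le | /ltnW le]; rewrite /mu_omega.
  by rewrite (nth_prefix (iter m mu [:: a])) ?size_iter_mu //; apply: prefix_iter_mu.
by rewrite [RHS](nth_prefix (iter i.+1 mu [:: a])) ?size_iter_mu //; apply: prefix_iter_mu.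
Qed.

Lemma mu_omega_half a k : mu_omega a k = odd k (+) mu_omega a k./2.
Proof.
have lt_k : k < 2 ^ k := ltn_expl k (isT : 1 < 2).
rewrite (mu_omegaE a (m := k) (i := k./2)); last by have := odd_double_half k; lia.
by rewrite /mu_omega iterS nth_mu // size_iter_mu; lia.
Qed.

Lemma mu_omega_fixed_point a : fixed_point (fun b => [:: b; ~~ b]) (mu_omega a).
Proof.
have mu_pref n : morph_apply (fun b => [:: b; ~~ b]) (pref (mu_omega a) n) =
                 pref (mu_omega a) n.*2.
  change (mu (pref (mu_omega a) n) = pref (mu_omega a) n.*2).
  apply: (@eq_from_nth _ false) => [|k]; rewrite size_mu !size_factor // => lt_k.
  by rewrite nth_mu ?size_factor // !nth_factor ?ltn_half_double // !add0n -mu_omega_half.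
split=> [n | m]; last by exists m; rewrite mu_pref size_factor; lia.
by rewrite mu_pref size_factor; apply: prefix_refl.
Qed.

Unset Implicit Arguments.
Set Strict Implicit.

Theorem corollary11 (w : iword) :
  power_free (7%:Q / 3%:Q)%R w ->
  ((exists h : morphism, ~ is_identity h /\ fixed_point h w) <->
   (w = mu_omega false \/ w = mu_omega true)).
Proof.
move=> free_w; split=> [[K [K_nid fp]] | w_tm]; last first.
  exists (fun b => [:: b; ~~ b]); split; first by move=> /(_ false).
  by case: w_tm => ->; apply: mu_omega_fixed_point.
have w_eq := fixed_point_image fp; have K_ne := fixed_point_nonerasing free_w fp.
suff: w = mu_omega (w 0) by case: (w 0); [right | left].
apply: functional_extensionality => i.
have lt_i : i < 2 ^ i.+1 := ltnW (ltn_expl i.+1 (isT : 1 < 2)).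
by rewrite /mu_omega -(pf73_fixed_point_pref i.+1 free_w w_eq K_ne K_nid) nth_factor.
Qed.
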